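(* Let $(P,\leqslant)$ be a conditionally-complete interpolating poset, let $P^* := \{x \in P : \exists\, y \in P,\ y \ll x\}$, and let $Q$ be a kernel retract of $P^*$. Then $Q$ is a conditionally-complete subposet of $P$. Moreover, for every nonempty subset $D$ of $Q$ bounded above in $P$, the supremum of $D$ in $Q$ exists and equals its supremum $\bigvee D$ in $P$.
   Context: A poset is conditionally-complete if every nonempty subset bounded above has a supremum. A nonempty subset $D$ is directed if any two elements of $D$ have an upper bound in $D$. For a poset $R$ and $x,y \in R$, $x \ll_R y$ ($x$ way-below $y$ in $R$) means: for every directed subset $D$ of $R$ bounded above in $R$ with supremum $d_0$ in $R$, $y \leqslant d_0$ implies $x \leqslant d$ for some $d \in D$; write $\ll$ for $\ll_P$. $P$ is interpolating if whenever $x \ll y$ there is $z$ with $x \ll z \ll y$. A kernel on $P^*$ is a map $j: P^* \to P^*$ with $j(j(x)) = j(x)$, $x \leqslant y \Rightarrow j(x) \leqslant j(y)$, and $j(x) \leqslant x$ for all $x,y \in P^*$. A kernel retraction is a map $k: P^* \to Q$, where $Q = \{x \in P^* : k(x) = x\}$, such that $x \mapsto k(x)$ is a kernel on $P^*$ and for every directed subset $D$ of $P^*$ bounded above, $k(\bigvee D) = \bigvee_Q k(D)$ (supremum in $Q$); such a $Q$ is called a kernel retract of $P^*$. A subset $Q \subseteq P$ (with the induced order) is a subposet of $P$ if for all $x,y \in Q$: $x \ll_Q y \iff x \ll y$. *)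

From mathcomp Require Import all_boot all_order.
Set Implicit Arguments. Unset Strict Implicit. Unset Printing Implicit Defensive.
Import Order.TTheory.
Local Open Scope order_scope.

(* Subsets of a poset T are predicates T -> Prop; a subset S carries the
   induced order.  All notions below are relative to such a carrier S;
   the whole poset P is S = (fun _ => True). *)
Section PosetDefs.
Context {disp : Order.disp_t} {T : porderType disp}.

Definition whole : T -> Prop := fun _ => True.

Definition ub_in (S A : T -> Prop) (u : T) : Prop :=
  S u /\ forall a, A a -> a <= u.

Definition sup_in (S A : T -> Prop) (s : T) : Prop :=
  ub_in S A s /\ forall u, ub_in S A u -> s <= u.

Definition bounded_in (S A : T -> Prop) : Prop := exists u, ub_in S A u.

Definition directed_in (S D : T -> Prop) : Prop :=
  (forall x, D x -> S x) /\ (exists x, D x) /\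
  (forall x y, D x -> D y -> exists z, [/\ D z, x <= z & y <= z]).

Definition cond_complete (S : T -> Prop) : Prop :=
  forall A, (forall x, A x -> S x) -> (exists x, A x) -> bounded_in S A ->
    exists s, sup_in S A s.

Definition way_below_in (S : T -> Prop) (x y : T) : Prop :=
  forall D, directed_in S D -> bounded_in S D -> forall d0, sup_in S D d0 ->
    y <= d0 -> exists d, D d /\ x <= d.

Definition interpolating : Prop :=
  forall x y, way_below_in whole x y ->
    exists z, way_below_in whole x z /\ way_below_in whole z y.

Definition Pstar (x : T) : Prop := exists y, way_below_in whole y x.

Definition kernel_retraction (k : T -> T) (Q : T -> Prop) : Prop :=
  (forall x, Q x <-> (Pstar x /\ k x = x)) /\
  [/\ (forall x, Pstar x -> Q (k x)),
      (forall x, Pstar x -> k (k x) = k x),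
      (forall x y, Pstar x -> Pstar y -> x <= y -> k x <= k y),
      (forall x, Pstar x -> k x <= x) &
      (forall D, directed_in Pstar D -> bounded_in Pstar D ->
         forall s, sup_in Pstar D s ->
           sup_in Q (fun y => exists2 x, D x & y = k x) (k s))].

Definition kernel_retract (Q : T -> Prop) : Prop :=
  exists k, kernel_retraction k Q.

Definition subposet (Q : T -> Prop) : Prop :=
  forall x y, Q x -> Q y -> (way_below_in Q x y <-> way_below_in whole x y).

End PosetDefs.

(* A supremum in P of elements of Q lies in P^* (which is upward closed) and is
   fixed by k, since k is monotone and deflationary; so it is also the
   supremum in Q.  For the subposet property, the only nontrivial direction
   lifts x <<_Q y to x << y: given a directed D in P with y <= sup D, pick
   w << y and interpolate w << z << sup D to find an element of D above z,
   hence in P^*.  Then D restricted to P^* is cofinal in D, and k maps it to a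
   directed subset of Q whose supremum in Q is k (sup D) >= y. *)
From mathcomp Require Import all_boot all_order.
Import Order.TTheory.
Local Open Scope order_scope.

Section Posets.
Context {disp : Order.disp_t} {T : porderType disp}.
Implicit Types (S A D : T -> Prop) (x y z : T).

Definition up_closed S : Prop := forall x y, S x -> x <= y -> S y.

Lemma sup_in_unique {S A x y} : sup_in S A x -> sup_in S A y -> x = y.
Proof.
by move=> [ubx lex] [uby ley]; apply: le_anti; rewrite lex // ley.
Qed.

Lemma way_below_in_le {S x y y'} :
  way_below_in S x y -> y <= y' -> way_below_in S x y'.
Proof.
move=> xy yy' D DS Db d0 d0D y'd0.
by apply: (xy D DS Db d0 d0D); apply: le_trans yy' _.
Qed.

Lemma bounded_in_whole S A : bounded_in S A -> bounded_in whole A.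
Proof. by case=> u [_ ubu]; exists u. Qed.

Lemma up_closed_Pstar : up_closed (@Pstar disp T).
Proof. by move=> x y [w wx] xy; exists w; apply: way_below_in_le xy. Qed.

Lemma directed_in_restrict {S D d0 d1} :
  up_closed S -> directed_in whole D -> D d1 -> S d1 -> sup_in whole D d0 ->
  directed_in S (fun a => D a /\ S a) /\ sup_in S (fun a => D a /\ S a) d0.
Proof.
move=> upS [_ [_ Ddir]] Dd1 Sd1 [[_ ubD] leD].
split; last split.
- split; first by move=> a [].
  split; first by exists d1.
  move=> a b [Da Sa] [Db _]; have [c [Dc ac bc]] := Ddir a b Da Db.
  by exists c; split=> //; split=> //; apply: upS ac.
- by split; [apply: upS _ _ (ubD d1 Dd1) | move=> a [Da _]; apply: ubD].
- move=> u [_ ubu]; apply: leD; split=> // a Da.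
  have [c [Dc ac d1c]] := Ddir a d1 Da Dd1.
  by apply: le_trans ac _; apply: ubu; split=> //; apply: upS d1c.
Qed.

Section KernelRetraction.
Variables (k : T -> T) (Q : T -> Prop).
Hypothesis retr : kernel_retraction k Q.

Lemma retract_Pstar {x} : Q x -> Pstar x.
Proof. by case: retr => HQ _ /HQ []. Qed.

Lemma retract_fixed {x} : Q x -> k x = x.
Proof. by case: retr => HQ _ /HQ []. Qed.

Lemma retract_mono {x y} : Pstar x -> Pstar y -> x <= y -> k x <= k y.
Proof. by case: retr => _ [_ _ mono _ _]; apply: mono. Qed.

Lemma retract_le {x} : Pstar x -> k x <= x.
Proof. by case: retr => _ [_ _ _ le _]; apply: le. Qed.

Lemma sup_in_retract {D s} :
  (forall x, D x -> Q x) -> (exists x, D x) -> sup_in whole D s -> sup_in Q D s.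
Proof.
move=> DQ [d Dd] [[_ ubD] leD].
have Ps : Pstar s := up_closed_Pstar _ _ (retract_Pstar (DQ d Dd)) (ubD d Dd).
have ks : k s = s.
  apply: le_anti; rewrite retract_le //= leD //; split=> // a Da.
  rewrite -(retract_fixed (DQ a Da)) retract_mono ?ubD //.
  exact: retract_Pstar (DQ a Da).
have Qs : Q s by case: retr => HQ _; apply/HQ.
by split; [split | move=> u [_ ubu]; apply: leD].
Qed.

Lemma cond_complete_retract : cond_complete (@whole disp T) -> cond_complete Q.
Proof.
move=> cc A AQ neA /bounded_in_whole Ab.
have [s sA] := cc A (fun _ _ => I) neA Ab.
by exists s; apply: sup_in_retract.
Qed.

Lemma directed_in_retract_image {D} :
  directed_in Pstar D -> directed_in Q (fun y => exists2 x, D x & y = k x).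
Proof.
case: retr => _ [kQ _ _ _ _] [DP [[d Dd] Ddir]].
split; first by move=> _ [a Da ->]; apply/kQ/DP.
split; first by exists (k d); exists d.
move=> _ _ [a Da ->] [b Db ->]; have [c [Dc ac bc]] := Ddir a b Da Db.
exists (k c); split; first by exists c.
- exact: retract_mono (DP a Da) (DP c Dc) ac.
- exact: retract_mono (DP b Db) (DP c Dc) bc.
Qed.

Lemma way_below_in_retract {x y} :
  cond_complete (@whole disp T) -> Q y ->
  way_below_in whole x y -> way_below_in Q x y.
Proof.
move=> cc Qy xy D [DQ [neD Ddir]] /bounded_in_whole Db d0 d0D yd0.
have [s sD] := cc D (fun _ _ => I) neD Db.
have sd0 := sup_in_unique (sup_in_retract DQ neD sD) d0D; subst d0.
exact: xy yd0.
Qed.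

Lemma way_below_in_of_retract {x y} : @interpolating disp T -> Q y ->
  way_below_in Q x y -> way_below_in whole x y.
Proof.
move=> interp Qy xy D Ddir Db d0 d0D yd0.
have [w wy] := retract_Pstar Qy.
have [z [wz zd0]] := interp w d0 (way_below_in_le wy yd0).
have [d1 [Dd1 zd1]] := zd0 D Ddir Db d0 d0D (lexx d0).
have Pd1 : Pstar d1 by exists w; apply: way_below_in_le zd1.
have [D'dir D'sup] := directed_in_restrict up_closed_Pstar Ddir Dd1 Pd1 d0D.
have kd0 : sup_in Q (fun y => exists2 a, D a /\ Pstar a & y = k a) (k d0).
  case: retr => _ [_ _ _ _ ksup]; apply: (ksup _ D'dir _ _ D'sup).
  by exists d0; case: D'sup.
have Pd0 : Pstar d0 := up_closed_Pstar _ _ (retract_Pstar Qy) yd0.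
have ykd0 : y <= k d0.
  by rewrite -(retract_fixed Qy); apply: retract_mono (retract_Pstar Qy) Pd0 yd0.
have [_ [[a [Da Pa] ->] xka]] :=
  xy _ (directed_in_retract_image D'dir) (ex_intro _ _ (proj1 kd0)) _ kd0 ykd0.
by exists a; split=> //; apply: le_trans xka (retract_le Pa).
Qed.

End KernelRetraction.
End Posets.

Theorem lemma2p4 (disp : Order.disp_t) (T : porderType disp) (Q : T -> Prop) :
  cond_complete (@whole disp T) -> @interpolating disp T -> kernel_retract Q ->
  [/\ cond_complete Q, subposet Q &
      forall D : T -> Prop, (forall x, D x -> Q x) -> (exists x, D x) ->
        bounded_in whole D ->
        exists s, sup_in whole D s /\ sup_in Q D s].
Proof.
move=> cc interp [k retr]; split.
- exact: (cond_complete_retract _ _ retr cc).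
- move=> x y _ Qy; split.
  + exact: (way_below_in_of_retract _ _ retr interp Qy).
  + exact: (way_below_in_retract _ _ retr cc Qy).
- move=> D DQ neD Db.
  have [s sD] := cc D (fun _ _ => I) neD Db.
  by exists s; split=> //; apply: (sup_in_retract _ _ retr DQ neD sD).
Qed.
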